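(* Let $X$ be an infinite compact metrizable space, $h\colon X\to X$ a minimal homeomorphism, and suppose $(X,h)$ has the topological small boundary property. Then for any $N\in\mathbb{N}$ there exists a closed set $Y\subset X$ such that $\mathrm{int}(Y)\neq\varnothing$, $\overline{\mathrm{int}(Y)}=Y$, $\partial Y$ is topologically $h$-small, and the sets $Y,h(Y),\dots,h^N(Y)$ are pairwise disjoint.
   Context: $\partial A$ is the boundary of $A$. A closed set $F\subset X$ is topologically $h$-small if there is $m\in\mathbb{Z}_{+}$ such that whenever $d(0),\dots,d(m)$ are $m+1$ distinct integers, $h^{d(0)}(F)\cap\cdots\cap h^{d(m)}(F)=\varnothing$. $(X,h)$ has the topological small boundary property if whenever $F,K\subset X$ are disjoint compact sets, there exist open sets $U,V\subset X$ with $F\subset U$, $K\subset V$, $\overline{U}\cap\overline{V}=\varnothing$ and $\partial U$ topologically $h$-small. *)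

From HB Require Import structures.
From mathcomp Require Import all_boot all_order all_algebra.
From mathcomp Require Import all_classical all_reals all_analysis.
Set Implicit Arguments. Unset Strict Implicit. Unset Printing Implicit Defensive.
Import Order.TTheory GRing.Theory Num.Theory.
Local Open Scope classical_set_scope.
Local Open Scope ring_scope.

Section Defs.
Context {T : topologicalType}.

Definition boundary (A : set T) : set T := closure A `\` interior A.

Definition homeo (h hinv : T -> T) : Prop :=
  [/\ cancel h hinv, cancel hinv h, continuous h & continuous hinv].

Definition hpow (h hinv : T -> T) (z : int) : T -> T :=
  match z with
  | Posz n => iter n h
  | Negz n => iter n.+1 hinv
  end.

Definition minimal_homeo (h : T -> T) : Prop :=
  forall E : set T, closed E -> h @` E = E -> E = set0 \/ E = setT.

Definition top_small (h hinv : T -> T) (F : set T) : Prop :=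
  closed F /\
  exists m : nat, forall d : 'I_m.+1 -> int, injective d ->
    \bigcap_(i in [set: 'I_m.+1]) (hpow h hinv (d i) @` F) = set0.

Definition top_small_boundary (h hinv : T -> T) : Prop :=
  forall F K : set T, compact F -> compact K -> F `&` K = set0 ->
  exists U V : set T, [/\ open U, open V, F `<=` U, K `<=` V &
    closure U `&` closure V = set0] /\ top_small h hinv (boundary U).
End Defs.

From HB Require Import structures.
From mathcomp Require Import all_boot all_order all_algebra.
From mathcomp Require Import all_classical all_reals all_analysis.
Import Order.TTheory GRing.Theory Num.Theory.
Local Open Scope classical_set_scope.
Local Open Scope ring_scope.

(* A minimal homeomorphism of an infinite Hausdorff space has no periodic
   points, since a periodic orbit would be a finite, hence closed, invariant
   set.  So a point x and its first N iterates are distinct, and Hausdorffness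
   gives an open B around x with B, h(B), ..., h^N(B) pairwise disjoint.
   Separating {x} from the complement of B by the small boundary property
   yields an open U whose closure Y lies in B; Y is regular closed and its
   boundary lies in that of U, so it is topologically small. *)

Lemma inj_iter {T : Type} {f : T -> T} n : injective f -> injective (iter n f).
Proof. by move=> finj; elim: n => [|n IHn] x y //= /finj /IHn. Qed.

Lemma image_periodic_orbit {T : Type} {f : T -> T} {x k} :
  (0 < k)%N -> iter k f x = x ->
  f @` ((fun i => iter i f x) @` `I_k) = (fun i => iter i f x) @` `I_k.
Proof.
move=> k_gt0 per_x; apply/seteqP; split=> t.
  case=> _ [i ik <-] <-; have : (i.+1 <= k)%N by [].
  rewrite leq_eqVlt => /orP[/eqP ik1|ik1]; last by exists i.+1.
  by exists 0%N => //; rewrite /= -{1}per_x -ik1.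
case=> -[|i] ik <-; last by exists (iter i f x) => //; exists i => //; exact: ltnW.
exists (iter k.-1 f x); first by exists k.-1 => //; rewrite /= prednK.
by rewrite /= -iterS prednK.
Qed.

Section IteratedMaps.
Context {T : topologicalType}.

Lemma continuous_iter (f : T -> T) n : continuous f -> continuous (iter n f).
Proof.
move=> fc; elim: n => [|n IHn] x /=; first exact: cvg_id.
exact: (continuous_comp (IHn x) (fc _)).
Qed.

Lemma minimal_aperiodic (h : T -> T) : accessible_space T ->
  infinite_set [set: T] -> minimal_homeo h ->
  forall x k, (0 < k)%N -> iter k h x <> x.
Proof.
move=> acc infT hmin x k k_gt0 per_x.
set E := (fun i => iter i h x) @` `I_k.
have finE : finite_set E by apply: finite_image; exact: finite_II.
have closedE : closed E by exact: (accessible_finite_set_closed (T := T)).1.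
have Ex : E x by exists 0%N.
case: (hmin E closedE (image_periodic_orbit k_gt0 per_x)) => E_eq.
  by move: Ex; rewrite E_eq.
by apply: infT; rewrite -E_eq.
Qed.

Definition disjoint_from_iterates (h : T -> T) N (B : set T) :=
  forall y z k, B y -> B z -> (0 < k <= N)%N -> y <> iter k h z.

Lemma nbhs_disjoint_from_iterates (h : T -> T) : hausdorff_space T ->
  continuous h -> forall N x, (forall k, (0 < k <= N)%N -> iter k h x <> x) ->
  exists B : set T, [/\ open B, B x & disjoint_from_iterates h N B].
Proof.
move=> hsT hc; elim=> [|N IHN] x aper_x.
  exists setT; split=> //; first exact: openT.
  by move=> y z k _ _ /andP[/leq_trans k_le /k_le].
have [B [oB Bx B_sep]] : exists B : set T,
    [/\ open B, B x & disjoint_from_iterates h N B].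
  by apply: IHN => k /andP[k_gt0 kN]; apply: aper_x; rewrite k_gt0 (leqW kN).
have : x != iter N.+1 h x by apply/eqP => /esym; exact: (aper_x N.+1 (leqnn _)).
move: hsT; rewrite open_hausdorff => hsT /hsT [[A C]] /= [Ax Cx] [oA oC /eqP AC0].
exists (B `&` A `&` (iter N.+1 h @^-1` C)); split.
- by apply: openI; [exact: openI | apply: open_comp => // t _; exact: continuous_iter].
- by split; [split=> //; rewrite -inE | rewrite /= -inE].
move=> y z k [[By Ay] _] [[Bz _] Cz] /andP[k_gt0]; rewrite leq_eqVlt.
case/orP=> [/eqP -> y_eq|kN]; last by apply: B_sep => //; rewrite k_gt0.
have : (A `&` C) y by split=> //; rewrite y_eq.
by rewrite AC0.
Qed.

Lemma disjoint_iterates_subset {h : T -> T} {B Y : set T} {N} :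
  injective h -> Y `<=` B -> disjoint_from_iterates h N B ->
  forall i j, (i <= N)%N -> (j <= N)%N -> i <> j ->
    iter i h @` Y `&` iter j h @` Y = set0.
Proof.
move=> hinj YB B_sep.
have lt_sep i j y z : (i < j <= N)%N -> Y y -> Y z -> iter i h y <> iter j h z.
  move=> /andP[ij jN] Yy Yz; rewrite -(subnKC (ltnW ij)) iterD => /(inj_iter i hinj).
  apply: B_sep; [exact: YB | exact: YB |].
  by rewrite subn_gt0 ij (leq_trans (leq_subr _ _) jN).
move=> i j iN jN ij; rewrite -subset0 => _ [[y Yy <-] [z Yz /= yz]].
case: (ltngtP i j) => [lij|lji|//].
- by apply: (lt_sep i j y z) => //; rewrite lij.
- by apply: (lt_sep j i z y) => //; rewrite lji.
Qed.

End IteratedMaps.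

Section Boundaries.
Context {T : topologicalType}.

Lemma closed_boundary (A : set T) : closed (boundary A).
Proof.
rewrite /boundary setDE; apply: closedI; first exact: closed_closure.
by rewrite closedC; exact: open_interior.
Qed.

Lemma open_subset_interior_closure (U : set T) :
  open U -> U `<=` interior (closure U).
Proof.
move=> oU; rewrite -{1}(proj1 (interior_id U) oU).
by apply: interiorS; exact: subset_closure.
Qed.

Lemma closure_interior_closure_open (U : set T) :
  open U -> closure (interior (closure U)) = closure U.
Proof.
move=> oU; apply/seteqP; split; last exact/closureS/open_subset_interior_closure.
rewrite {2}(proj1 (closure_id _) (closed_closure (A := U))).
by apply: closureS; exact: interior_subset.
Qed.

Lemma boundary_closure_open (U : set T) :
  open U -> boundary (closure U) `<=` boundary U.
Proof.
move=> oU t [clt not_intt]; split.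
  by rewrite (proj1 (closure_id _) (closed_closure (A := U))).
by rewrite (proj1 (interior_id U) oU) => Ut; apply/not_intt/open_subset_interior_closure.
Qed.

Lemma top_small_subset (h hinv : T -> T) (F G : set T) :
  closed F -> F `<=` G -> top_small h hinv G -> top_small h hinv F.
Proof.
move=> closedF FG [_ [m G_small]]; split=> //; exists m => d dinj.
rewrite -subset0 -(G_small d dinj) => w Fw i _.
by have [t Ft <-] := Fw i I; exists t => //; exact: FG.
Qed.

End Boundaries.

Theorem lemma5p4 (R : realType) (X : pseudoMetricType R)
  (h hinv : X -> X) :
  hausdorff_space X -> compact [set: X] -> infinite_set [set: X] ->
  homeo h hinv -> minimal_homeo h -> top_small_boundary h hinv ->
  forall N : nat, exists Y : set X,
    [/\ closed Y, interior Y != set0, closure (interior Y) = Y,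
        top_small h hinv (boundary Y) &
        forall i j : nat, (i <= N)%N -> (j <= N)%N -> i <> j ->
          (hpow h hinv i%:Z @` Y) `&` (hpow h hinv j%:Z @` Y) = set0].
Proof.
move=> hsX cX infX [hK _ hc _] hmin tsb N.
have [x _] : exists x : X, True.
  apply: contrapT => noX; apply: infX; suff -> : [set: X] = set0 by [].
  by apply/seteqP; split=> // t _; apply: noX; exists t.
have aper := minimal_aperiodic h (hausdorff_accessible hsX) infX hmin.
have [B [oB Bx B_sep]] : exists B : set X,
    [/\ open B, B x & disjoint_from_iterates h N B].
  by apply: nbhs_disjoint_from_iterates => // k /andP[k_gt0 _]; exact: aper.
have cK : compact (~` B) by apply: subclosed_compact cX _ => //; rewrite closedC.
have xK0 : [set x] `&` ~` B = set0 by rewrite -subset0 => t [/= -> ].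
have [U [V [[oU oV xU KV UV0] small_bdU]]] := tsb _ _ (@compact_set1 _ x) cK xK0.
have YB : closure U `<=` B.
  move=> t Ut; apply: contrapT => nBt.
  have : (closure U `&` closure V) t by split=> //; exact/subset_closure/KV.
  by rewrite UV0.
exists (closure U); split.
- exact: closed_closure.
- by apply/set0P; exists x; apply: open_subset_interior_closure => //; exact: xU.
- exact: closure_interior_closure_open.
- exact: top_small_subset (closed_boundary _) (boundary_closure_open _ oU) small_bdU.
- move=> i j iN jN ij.
  exact: (disjoint_iterates_subset (can_inj hK) YB B_sep i j iN jN ij).
Qed.
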